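(* Let $N_k=N\cup\{\Gamma\rightarrow E_1,\dots,E_n\}$ and $N_{k+1}=N\cup\{\Gamma\rightarrow E_i\}$ (a Horn transformation, $n>1$). Let $N^\bot_{k+1}$ be a conflicting core of $N_{k+1}$, and let $(\Gamma\rightarrow E_i)\sigma_j$, $1\le j\le m$, be the clauses of $N^\bot_{k+1}$ that are instances of $\Gamma\rightarrow E_i$ (taken as the replaced ones). Suppose that for each $j$ there are a substitution $\sigma'_j$, a subset $N^j_k\subseteq N_k$ and a substitution $\tau_j$ such that for every grounding substitution $\theta$, $N^j_k\tau_j\theta\cup\{(\Gamma\rightarrow E_1,\dots,E_n)\sigma'_j\theta\}\models(\Gamma\rightarrow E_i)\sigma_j\theta$. Then $$\big(N^\bot_{k+1}\setminus\{(\Gamma\rightarrow E_i)\sigma_j\mid 1\le j\le m\}\big)\cup\{(\Gamma\rightarrow E_1,\dots,E_n)\sigma'_j\mid 1\le j\le m\}\cup\bigcup_j N^j_k\tau_j$$ is a conflicting core of $N_k$.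
   Context: First-order logic without equality. A clause is a finite multiset of literals written $\Gamma \rightarrow \Delta$. A Herbrand interpretation is a set of ground atoms; $I \models \Gamma\rightarrow\Delta$ iff for every grounding substitution $\sigma$, $\Delta\sigma\cap I\neq\emptyset$ or $\Gamma\sigma\not\subseteq I$; for ground clause sets, $M\models D$ means every model of $M$ satisfies $D$. A finite clause set $N^\bot$ is a conflicting core if for every substitution $\tau$ grounding all of $N^\bot$ (one substitution for the whole set, so variables are shared among clauses) the set $N^\bot\tau$ is unsatisfiable. $N^\bot$ is a conflicting core of $N$ if moreover every $C\in N^\bot$ equals $C'\sigma$ for some $C'\in N$ and substitution $\sigma$. *)

From Stdlib Require Import List Permutation.
Import ListNotations.

(* Terms over an untyped signature: function symbols are nats (any arity). *)
Inductive term : Type :=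
| Var : nat -> term
| Fn  : nat -> list term -> term.

Definition atom : Type := (nat * list term)%type.

(* A clause  Gamma -> Delta  : (Gamma, Delta), each a finite multiset (list). *)
Definition clause : Type := (list atom * list atom)%type.

Definition clause_set : Type := clause -> Prop.

Definition subst : Type := nat -> term.

Fixpoint tsubst (s : subst) (t : term) : term :=
  match t with
  | Var x => s x
  | Fn f ts => Fn f (map (tsubst s) ts)
  end.

Definition asubst (s : subst) (a : atom) : atom := (fst a, map (tsubst s) (snd a)).

Definition csubst (s : subst) (C : clause) : clause :=
  (map (asubst s) (fst C), map (asubst s) (snd C)).

Fixpoint ground_term (t : term) : Prop :=
  match t with
  | Var _ => False
  | Fn _ ts => (fix aux (l : list term) : Prop :=
                 match l with
                 | [] => True
                 | u :: l' => ground_term u /\ aux l'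
                 end) ts
  end.

Definition grounding (s : subst) : Prop := forall x, ground_term (s x).

Definition clause_eq (C D : clause) : Prop :=
  Permutation (fst C) (fst D) /\ Permutation (snd C) (snd D).

(* Herbrand interpretation: a set of (ground) atoms. *)
Definition interp : Type := atom -> Prop.

Definition sat_ground (I : interp) (C : clause) : Prop :=
  (exists a, In a (snd C) /\ I a) \/ (exists a, In a (fst C) /\ ~ I a).

Definition models_set (I : interp) (M : clause_set) : Prop :=
  forall C, M C -> sat_ground I C.

Definition entails (M : clause_set) (D : clause) : Prop :=
  forall I : interp, models_set I M -> sat_ground I D.

Definition finite_set (S : clause_set) : Prop :=
  exists l : list clause, forall C, S C <-> In C l.

Definition set_subst (t : subst) (S : clause_set) : clause_set :=
  fun D => exists C, S C /\ D = csubst t C.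

Definition unsatisfiable (M : clause_set) : Prop :=
  ~ exists I : interp, models_set I M.

Definition instance_of (N : clause_set) (C : clause) : Prop :=
  exists C' s, N C' /\ clause_eq C (csubst s C').

Definition conflicting_core (S : clause_set) : Prop :=
  finite_set S /\ forall t, grounding t -> unsatisfiable (set_subst t S).

Definition conflicting_core_of (S N : clause_set) : Prop :=
  conflicting_core S /\ forall C, S C -> instance_of N C.

Definition set_add (N : clause_set) (C : clause) : clause_set :=
  fun D => N D \/ D = C.

Definition of_list (l : list clause) : clause_set := fun C => In C l.

(** Under any grounding, a model of the new set is a model of the old core:
    a kept clause is still present, and a replaced instance [(Gamma -> E_i) sigma_j]
    follows from [(Gamma -> E_1, ..., E_n) sigma'_j] and [N^j_k tau_j], which were
    added. So unsatisfiability carries over. The kept clauses are instances of [N_k]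
    because, not being replaced, they are not instances of [Gamma -> E_i]. *)

From Stdlib Require Import List Permutation Classical Lia.
Import ListNotations.

Lemma finite_set_ext (S T : clause_set) :
  (forall C, S C <-> T C) -> finite_set S -> finite_set T.
Proof.
  intros HST [l Hl]. exists l. intro C. rewrite <- HST. apply Hl.
Qed.

Lemma finite_set_filter (S : clause_set) (P : clause -> Prop) :
  finite_set S -> finite_set (fun C => S C /\ P C).
Proof.
  intros [l Hl]. apply (finite_set_ext (fun C => In C l /\ P C)).
  { intro C. rewrite Hl. tauto. }
  clear Hl. induction l as [|D l [l' IH]].
  - exists []. simpl. tauto.
  - destruct (classic (P D)) as [HD|HD].
    + exists (D :: l'). intro C. simpl. rewrite <- IH.
      split; [intros [[<-|H] HP]|intros [<-|H]]; tauto.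
    + exists l'. intro C. simpl. rewrite <- IH.
      split; [intros [[<-|H] HP]|]; tauto.
Qed.

Lemma finite_set_union (S T : clause_set) :
  finite_set S -> finite_set T -> finite_set (fun C => S C \/ T C).
Proof.
  intros [l Hl] [l' Hl']. exists (l ++ l'). intro C. rewrite in_app_iff, Hl, Hl'. tauto.
Qed.

Lemma finite_set_exists_lt (m : nat) (F : nat -> clause_set) :
  (forall j, j < m -> finite_set (F j)) ->
  finite_set (fun C => exists j, j < m /\ F j C).
Proof.
  induction m as [|m IH]; intro HF.
  - exists []. intro C. simpl. split; [intros [j [Hj _]]; lia|tauto].
  - apply (finite_set_ext (fun C => (exists j, j < m /\ F j C) \/ F m C)).
    + intro C. split.
      * intros [[j [Hj HC]]|HC]; exists j || exists m; split; auto; lia.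
      * intros [j [Hj HC]]. destruct (PeanoNat.Nat.eq_dec j m) as [->|Hjm]; [now right|].
        left. exists j. split; [lia|exact HC].
    + apply finite_set_union; [apply IH; auto|apply HF; lia].
Qed.

Lemma finite_set_singleton (D : clause) : finite_set (fun C => C = D).
Proof.
  exists [D]. intro C. simpl. split; [auto|intros [<-|[]]; reflexivity].
Qed.

Lemma finite_set_subst_of_list (t : subst) (l : list clause) :
  finite_set (set_subst t (of_list l)).
Proof.
  exists (map (csubst t) l). intro C. rewrite in_map_iff.
  split; intros [D [HD HC]]; exists D; auto.
Qed.

Lemma clause_eq_refl (C : clause) : clause_eq C C.
Proof. split; apply Permutation_refl. Qed.

Lemma clause_eq_csubst (t : subst) (C D : clause) :
  clause_eq C D -> clause_eq (csubst t C) (csubst t D).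
Proof.
  intros [H1 H2]. split; apply Permutation_map; assumption.
Qed.

Lemma sat_ground_clause_eq (I : interp) (C D : clause) :
  clause_eq C D -> sat_ground I D -> sat_ground I C.
Proof.
  intros [H1 H2] [[a [Ha Ia]]|[a [Ha Ia]]].
  - left. exists a. split; [eapply Permutation_in; [symmetry; exact H2|exact Ha]|exact Ia].
  - right. exists a. split; [eapply Permutation_in; [symmetry; exact H1|exact Ha]|exact Ia].
Qed.

Lemma unsatisfiable_weaken (M M' : clause_set) :
  (forall I, models_set I M' -> models_set I M) ->
  unsatisfiable M -> unsatisfiable M'.
Proof.
  intros HM HU [I HI]. apply HU. exists I. apply HM, HI.
Qed.

Lemma conflicting_core_of_models (S S' : clause_set) :
  conflicting_core S -> finite_set S' ->
  (forall t, grounding t -> forall I,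
     models_set I (set_subst t S') -> models_set I (set_subst t S)) ->
  conflicting_core S'.
Proof.
  intros [_ HS] Hfin HM. split; [exact Hfin|].
  intros t Ht. apply (unsatisfiable_weaken _ _ (HM t Ht)), HS, Ht.
Qed.

Lemma instance_of_csubst (N : clause_set) (C : clause) (s : subst) :
  N C -> instance_of N (csubst s C).
Proof.
  intro HC. exists C, s. split; [exact HC|apply clause_eq_refl].
Qed.

Lemma instance_of_set_add_inv (N : clause_set) (C D : clause) :
  instance_of (set_add N C) D -> ~ instance_of (fun C' => C' = C) D ->
  instance_of N D.
Proof.
  intros [C' [s [[HN| ->] Heq]]] Hnot.
  - exists C', s. split; assumption.
  - exfalso. apply Hnot. exists C, s. split; [reflexivity|exact Heq].
Qed.

Theorem lemma5
  (N : clause_set) (Gamma E : list atom) (i : nat)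
  (Hn : 1 < length E) (Hi : i < length E)
  (Nbot : clause_set)
  (m : nat) (sigma sigma' tau : nat -> subst) (Nj : nat -> list clause) :
  let Cn := (Gamma, E) : clause in
  let Ci := (Gamma, [nth i E (0, [])]) : clause in
  let Nk := set_add N Cn in
  let Nk1 := set_add N Ci in
  conflicting_core_of Nbot Nk1 ->
  (forall j, j < m -> Nbot (csubst (sigma j) Ci)) ->
  (forall C, Nbot C -> instance_of (fun D => D = Ci) C ->
     exists j, j < m /\ clause_eq C (csubst (sigma j) Ci)) ->
  (forall j, j < m -> forall C, In C (Nj j) -> Nk C) ->
  (forall j, j < m -> forall theta, grounding theta ->
     entails
       (fun D => set_subst theta (set_subst (tau j) (of_list (Nj j))) D
                 \/ D = csubst theta (csubst (sigma' j) Cn))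
       (csubst theta (csubst (sigma j) Ci))) ->
  conflicting_core_of
    (fun C =>
       (Nbot C /\ ~ (exists j, j < m /\ clause_eq C (csubst (sigma j) Ci)))
       \/ (exists j, j < m /\ C = csubst (sigma' j) Cn)
       \/ (exists j, j < m /\ set_subst (tau j) (of_list (Nj j)) C))
    Nk.
Proof.
  intros Cn Ci Nk Nk1 [Hcore Hinst] _ Hreplaced HNj Hent.
  split.
  - apply (conflicting_core_of_models Nbot); [exact Hcore| |].
    + destruct Hcore as [Hfin _].
      repeat apply finite_set_union; try apply finite_set_exists_lt; intros;
        auto using finite_set_filter, finite_set_singleton, finite_set_subst_of_list.
    + intros t Ht I HI D [C [HC ->]].
      destruct (classic (exists j, j < m /\ clause_eq C (csubst (sigma j) Ci)))
        as [[j [Hj Heq]]|Hkept].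
      * apply (sat_ground_clause_eq _ _ _ (clause_eq_csubst t _ _ Heq)).
        apply (Hent j Hj t Ht). intros D [[C' [HC' ->]]| ->]; apply HI.
        -- exists C'. split; [right; right; exists j; auto|reflexivity].
        -- eexists. split; [right; left; exists j; auto|reflexivity].
      * apply HI. exists C. split; [left; auto|reflexivity].
  - intros C [[HC Hkept]|[[j [Hj ->]]|[j [Hj [C' [HC' ->]]]]]].
    + assert (HN : instance_of N C).
      { apply (instance_of_set_add_inv _ Ci); [apply Hinst, HC|].
        intro HCi. apply Hkept, Hreplaced; assumption. }
      destruct HN as [C' [s [HC' Heq]]]. exists C', s. split; [left|]; assumption.
    + apply instance_of_csubst. right. reflexivity.
    + apply instance_of_csubst, (HNj j Hj), HC'.
Qed.
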